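(* Let $I$ be a nonempty set and $\mathbf{Lat}_I$ the category of $I$-complete lattices. Then $\mathbf{Lat}_I$ has 2-fold subobject decompositions over $I$: for any family $(L_i)_{i\in I}$ of $I$-complete lattices and any two $I$-complete sublattices $S,T$ of $\prod_{i\in I}L_i$, if for all $i,j\in I$ the images of $S$ and $T$ under the projection $\prod_{i\in I}L_i\to L_i\times L_j$ coincide, then $S=T$.
   Context: An $I$-complete lattice is a lattice in which every family $(x_i)_{i\in I}$ of elements has a meet and a join; a homomorphism of $I$-complete lattices is a map preserving meets and joins of $I$-indexed families; $\mathbf{Lat}_I$ is the resulting category. Products are computed componentwise and subobjects are $I$-complete sublattices (subsets closed under $I$-indexed meets and joins). *)

Set Implicit Arguments.

Definition is_glb (L K : Type) (le : L -> L -> Prop) (x : K -> L) (m : L) : Prop :=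
  (forall k, le m (x k)) /\ (forall y, (forall k, le y (x k)) -> le y m).
Definition is_lub (L K : Type) (le : L -> L -> Prop) (x : K -> L) (m : L) : Prop :=
  (forall k, le (x k) m) /\ (forall y, (forall k, le (x k) y) -> le m y).

Record ICLat (I : Type) := {
  carrier :> Type;
  le : carrier -> carrier -> Prop;
  le_refl : forall x, le x x;
  le_antisym : forall x y, le x y -> le y x -> x = y;
  le_trans : forall x y z, le x y -> le y z -> le x z;
  meet2 : carrier -> carrier -> carrier;
  join2 : carrier -> carrier -> carrier;
  meet2_glb : forall x y, is_glb le (fun b : bool => if b then x else y) (meet2 x y);
  join2_lub : forall x y, is_lub le (fun b : bool => if b then x else y) (join2 x y);
  meetI : (I -> carrier) -> carrier;
  joinI : (I -> carrier) -> carrier;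
  meetI_glb : forall x : I -> carrier, is_glb le x (meetI x);
  joinI_lub : forall x : I -> carrier, is_lub le x (joinI x)
}.

Definition prod_meetI (I : Type) (L : I -> ICLat I)
  (x : I -> forall i, L i) : forall i, L i :=
  fun i => meetI (L i) (fun k => x k i).
Definition prod_joinI (I : Type) (L : I -> ICLat I)
  (x : I -> forall i, L i) : forall i, L i :=
  fun i => joinI (L i) (fun k => x k i).

Definition is_ICsublattice (I : Type) (L : I -> ICLat I)
  (S : (forall i, L i) -> Prop) : Prop :=
  forall x : I -> forall i, L i, (forall k, S (x k)) ->
    S (prod_meetI L x) /\ S (prod_joinI L x).

Definition proj2_image (I : Type) (L : I -> ICLat I)
  (S : (forall i, L i) -> Prop) (i j : I) : L i * L j -> Prop :=
  fun p => exists x, S x /\ p = (x i, x j).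

(* A point x of S is recovered from its two-coordinate shadows.  If for all
   i, j some y_ij in T agrees with x at i and j, put z_i = /\_j y_ij.  At a
   coordinate k we have z_i k <= y_ik k = x k, and z_i i = x i, so
   x = \/_i z_i, which lies in T since T is closed under I-indexed meets and
   joins.  By symmetry S = T. *)
From Stdlib Require Import FunctionalExtensionality PropExtensionality ClassicalEpsilon.

Section AttainedBounds.

Variables (I : Type) (M : ICLat I).

Lemma meetI_attained (x : I -> M) (a : M) (k0 : I) :
  (forall k, le M a (x k)) -> x k0 = a -> meetI M x = a.
Proof.
  intros Hlow Hk0.
  destruct (meetI_glb M x) as [Hlb Hgreatest].
  apply le_antisym.
  - rewrite <- Hk0. apply Hlb.
  - apply Hgreatest, Hlow.
Qed.

Lemma joinI_attained (x : I -> M) (a : M) (k0 : I) :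
  (forall k, le M (x k) a) -> x k0 = a -> joinI M x = a.
Proof.
  intros Hup Hk0.
  destruct (joinI_lub M x) as [Hub Hleast].
  apply le_antisym.
  - apply Hleast, Hup.
  - rewrite <- Hk0. apply Hub.
Qed.

End AttainedBounds.

Section Interpolation.

Variables (I : Type) (L : I -> ICLat I).

Lemma prod_joinI_meetI_interpolant (x : forall k, L k) (y : I -> I -> forall k, L k) :
  (forall i j, y i j i = x i /\ y i j j = x j) ->
  prod_joinI L (fun i => prod_meetI L (y i)) = x.
Proof.
  intros Hy.
  apply functional_extensionality_dep; intro k.
  apply joinI_attained with (k0 := k).
  - intro i. unfold prod_meetI.
    destruct (meetI_glb (L k) (fun j => y i j k)) as [Hlb _].
    rewrite <- (proj2 (Hy i k)). apply Hlb.
  - apply meetI_attained with (k0 := k).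
    + intro j. rewrite (proj1 (Hy k j)). apply le_refl.
    + apply (proj1 (Hy k k)).
Qed.

Lemma ICsublattice_incl_of_proj2_image_incl (S T : (forall k, L k) -> Prop) :
  is_ICsublattice L T ->
  (forall i j p, proj2_image L S i j p -> proj2_image L T i j p) ->
  forall x, S x -> T x.
Proof.
  intros HT Himage x Sx.
  assert (Hshadow : forall i j, exists y, T y /\ y i = x i /\ y j = x j).
  { intros i j.
    destruct (Himage i j (x i, x j)) as [y [Ty Exy]]; [now exists x |].
    injection Exy; intros; now exists y. }
  destruct (choice _ (fun i => choice _ (Hshadow i))) as [y Hy].
  rewrite <- (prod_joinI_meetI_interpolant x y) by (intros i j; apply Hy).
  apply HT; intro i.
  apply HT; intro j.
  apply Hy.
Qed.

End Interpolation.

Theorem proposition4p10 (I : Type) (HI : inhabited I) (L : I -> ICLat I)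
  (S T : (forall i, L i) -> Prop) :
  is_ICsublattice L S -> is_ICsublattice L T ->
  (forall i j : I, proj2_image L S i j = proj2_image L T i j) ->
  S = T.
Proof.
  intros HS HT Eimage.
  apply functional_extensionality; intro x.
  apply propositional_extensionality; split.
  - apply ICsublattice_incl_of_proj2_image_incl; [exact HT |].
    intros i j p; now rewrite Eimage.
  - apply ICsublattice_incl_of_proj2_image_incl; [exact HS |].
    intros i j p; now rewrite Eimage.
Qed.
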